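(* Let $F$ be a minimally unsatisfiable clause-set and $C\in F$. Let $C' := \{x\in C : \mathrm{ldeg}_F(x)=1\}$, and for $x\in C'$ let $F_x := \{D\in F : \overline{x}\in D\}$. Assume $|C'|\ge2$ and that for every $x\in C'$ the clause-set $\mathrm{DP}_{\mathrm{var}(x)}(F)$ is saturated minimally unsatisfiable. Then: 1. $|C'|=2$. 2. For all $x\in C'$ and all $D\in F_x$: $C\setminus C'\subseteq D$. 3. For $x,y\in C'$, the clause-sets $\mathrm{DP}_{\mathrm{var}(x)}(F)$ and $\mathrm{DP}_{\mathrm{var}(y)}(F)$ are isomorphic.
   Context: Literals are variables $v$ and complements $\overline{v}$; a clause is a finite set of literals with no complementary pair; a clause-set is a finite set of clauses; $\mathrm{var}(F)$ is the set of variables of $F$, $\mathrm{var}(x)$ the variable of literal $x$; $\mathrm{ldeg}_F(x)$ is the number of clauses of $F$ containing literal $x$. $\mathrm{DP}_v(F) := \{C \in F : v \notin \mathrm{var}(C)\} \cup \{(C \cup D)\setminus\{v,\overline{v}\} : C, D \in F,\ C \cap \overline{D} = \{v\}\}$. A minimally unsatisfiable $F$ is saturated if for every $C \in F$ and every literal $y$ with $\mathrm{var}(y) \in \mathrm{var}(F)\setminus \mathrm{var}(C)$, the clause-set $(F\setminus\{C\})\cup\{C\cup\{y\}\}$ is satisfiable. Clause-sets are isomorphic if a complement-preserving bijection on literals maps the clauses of one exactly onto the clauses of the other. *)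

From HB Require Import structures.
From mathcomp Require Import all_boot.
From mathcomp Require Import finmap.
Set Implicit Arguments. Unset Strict Implicit. Unset Printing Implicit Defensive.
Local Open Scope fset_scope.

(* Variables are natural numbers; a literal is (v, true) for v and
   (v, false) for its complement. *)
Definition lit := (nat * bool)%type.
Definition compl (x : lit) : lit := (x.1, ~~ x.2).
Definition lvar (x : lit) : nat := x.1.

Definition clause := {fset lit}.
Definition cls := {fset clause}.

Definition is_clause (C : clause) : Prop := forall x, x \in C -> compl x \notin C.
Definition is_clauseset (F : cls) : Prop := forall C, C \in F -> is_clause C.

Definition cvar (C : clause) : {fset nat} := [fset lvar x | x in C].
Definition fvar (F : cls) : {fset nat} := \bigcup_(C <- F) cvar C.

Definition ldeg (F : cls) (x : lit) : nat := #|` [fset D in F | x \in D]|.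

Definition sat_clause (f : nat -> bool) (C : clause) : bool :=
  [exists x : C, f (val x).1 == (val x).2].
Definition satisfiable (F : cls) : Prop :=
  exists f : nat -> bool, forall C, C \in F -> sat_clause f C.

Definition MU (F : cls) : Prop :=
  ~ satisfiable F /\ forall C, C \in F -> satisfiable (F `\ C).

Definition clash (C D : clause) : {fset lit} := [fset x in C | compl x \in D].

Definition DP (v : nat) (F : cls) : cls :=
  [fset C in F | v \notin cvar C] `|`
  [fset (C `|` D) `\` [fset (v, true); (v, false)]
     | C in F, D in F & clash C D == [fset (v, true)]].

Definition saturated_MU (F : cls) : Prop :=
  MU F /\
  forall C y, C \in F -> lvar y \in fvar F -> lvar y \notin cvar C ->
    satisfiable ((F `\ C) `|` [fset C `|` [fset y]]).

Definition isomorphic (F G : cls) : Prop :=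
  exists f : lit -> lit, bijective f /\ (forall x, f (compl x) = compl (f x)) /\
    [fset [fset f x | x in (C : clause)] | C : clause in F] = G.

From mathcomp Require Import all_boot finmap.
Set Implicit Arguments. Unset Strict Implicit. Unset Printing Implicit Defensive.
Local Open Scope fset_scope.

(* Write G_x for DP_{var x}(F), x in C'.  As x occurs only in C, a clause of
   G_x is either a clause of F without var x or a resolvent of C, which
   contains C \ {x}; unsatisfiability of G_x forces such a resolvent to exist.
   Three distinct x, y, z in C' are impossible: every clause of G_x containing
   z contains y, so an assignment that falsifies only a clause with ~z (one
   exists since G_x is MU) and sets y true (saturation provides one) becomes a
   model of G_x once ~z is made true.  With C' = {x, y}, a similar repair shows
   that a clause containing ~x contains C \ C' but not ~y.  Hence the
   resolvents in G_x are exactly the clauses {y} u (D \ {~x}), and the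
   complement-preserving bijection x |-> ~y, y |-> ~x maps G_x onto G_y. *)

Lemma complK : involutive compl.
Proof. by case=> v []. Qed.

Lemma compl_neq x : compl x != x.
Proof. by case: x => v [] /=; rewrite /compl xpair_eqE eqxx. Qed.

Lemma eq_lvar x y : lvar y = lvar x -> y = x \/ y = compl x.
Proof. by case: x y => v [] [w []] /= ->; auto. Qed.

Lemma mem_cvar x K : x \in K -> lvar x \in cvar K.
Proof. exact: in_imfset. Qed.

Lemma cvarP K v : reflect (exists2 l, l \in K & lvar l = v) (v \in cvar K).
Proof.
apply: (iffP idP) => [/imfsetP [l /= lK ->]|[l lK <-]]; first by exists l.
exact: mem_cvar.
Qed.

Lemma notin_cvar x K : (lvar x \notin cvar K) = (x \notin K) && (compl x \notin K).
Proof.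
apply/idP/andP => [xK|[xK nxK]].
  by split; apply: contra xK => /mem_cvar.
by apply/cvarP => -[l lK /eq_lvar [] el]; move: lK; rewrite el; apply/negP.
Qed.

Lemma cvarS A B : A `<=` B -> cvar A `<=` cvar B.
Proof.
by move=> AB; apply/fsubsetP => v /cvarP [l /(fsubsetP AB) lB <-]; apply: mem_cvar.
Qed.

Lemma notin_cvarD1 l A : (lvar l \notin cvar (A `\ compl l)) = (l \notin A).
Proof. by rewrite notin_cvar !in_fsetD1 eqxx /= andbT eq_sym compl_neq. Qed.

Lemma fvarP G v : reflect (exists2 K, K \in G & v \in cvar K) (v \in fvar G).
Proof.
apply: (iffP idP) => [/bigfcupP [K /andP [KG _] vK]|[K KG vK]]; first by exists K.
by apply/bigfcupP; exists K; rewrite ?KG.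
Qed.

Lemma clause_lvar_neq K x y :
  is_clause K -> x \in K -> y \in K -> x != y -> lvar x != lvar y.
Proof.
move=> hK xK yK xy; apply/eqP => /eq_lvar [ex|ex]; first by rewrite ex eqxx in xy.
by move: (hK y yK); rewrite -ex xK.
Qed.

Lemma ldeg1_eq F x C D :
  ldeg F x = 1 -> C \in F -> x \in C -> D \in F -> x \in D -> D = C.
Proof.
move=> /eqP /cardfs1P [E hE] CF xC DF xD.
have: C \in [fset D in F | x \in D] by rewrite !inE CF xC.
have: D \in [fset D in F | x \in D] by rewrite !inE DF xD.
by rewrite hE !in_fset1 => /eqP -> /eqP ->.
Qed.

Definition lit_true (f : nat -> bool) (l : lit) : bool := f l.1 == l.2.

Definition set_lit (f : nat -> bool) (l : lit) : nat -> bool :=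
  fun v => if v == lvar l then l.2 else f v.

Lemma lit_trueN f l : lit_true f (compl l) = ~~ lit_true f l.
Proof. by case: l => v [] /=; rewrite /lit_true /=; case: (f v). Qed.

Lemma sat_clauseP f K : reflect (exists2 l, l \in K & lit_true f l) (sat_clause f K).
Proof.
apply: (iffP existsP) => [[[l lK] /= fl]|[l lK fl]]; first by exists l.
by exists [`lK].
Qed.

Lemma unsat_lit f K l : ~~ sat_clause f K -> l \in K -> ~~ lit_true f l.
Proof. by move=> nsat lK; apply: contra nsat => fl; apply/sat_clauseP; exists l. Qed.

Lemma unsat_compl f K l : ~~ sat_clause f K -> compl l \in K -> lit_true f l.
Proof. by move=> nsat /(unsat_lit nsat); rewrite lit_trueN negbK. Qed.

Lemma set_lit_true f l : lit_true (set_lit f l) l.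
Proof. by rewrite /lit_true /set_lit eqxx. Qed.

Lemma set_lit_other f l m :
  lvar m != lvar l -> lit_true (set_lit f l) m = lit_true f m.
Proof. by rewrite /lit_true /set_lit => /negbTE ->. Qed.

Lemma sat_set_lit f l K :
  sat_clause f K -> compl l \notin K -> sat_clause (set_lit f l) K.
Proof.
move=> /sat_clauseP [m mK fm] nlK; apply/sat_clauseP; exists m => //.
case: (eqVneq (lvar m) (lvar l)) => [/eq_lvar [el|el]|ne].
- by subst m; rewrite set_lit_true.
- by subst m; rewrite mK in nlK.
- by rewrite set_lit_other.
Qed.

Definition sat_except (f : nat -> bool) (G : cls) (E : clause) : Prop :=
  forall K, K \in G -> K != E -> sat_clause f K.

Lemma sat_except_sat f G E :
  sat_except f G E -> sat_clause f E -> satisfiable G.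
Proof.
by move=> hf fE; exists f => K KG; have [->|] := eqVneq K E; last exact: hf.
Qed.

Lemma MU_critical G E :
  MU G -> E \in G -> exists f, sat_except f G E /\ ~~ sat_clause f E.
Proof.
case=> nsat crit EG; have [f hf] := crit E EG.
have fG : sat_except f G E by move=> K KG KE; apply: hf; rewrite in_fsetD1 KE.
by exists f; split=> //; apply/negP => fE; apply: nsat; apply: sat_except_sat fG fE.
Qed.

Lemma saturated_MU_critical G E y :
  saturated_MU G -> E \in G -> lvar y \in fvar G -> y \notin E ->
  exists f, [/\ sat_except f G E, ~~ sat_clause f E & lit_true f y].
Proof.
case=> muG sat EG yG yE.
have [nyE|yvE] := boolP (compl y \in E).
  have [f [fG fE]] := MU_critical muG EG.
  by exists f; split; last exact: unsat_compl fE nyE.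
have [f hf] : satisfiable ((G `\ E) `|` [fset E `|` [fset y]]).
  by apply: sat EG yG _; rewrite notin_cvar yE.
have fG : sat_except f G E.
  by move=> K KG KE; apply: hf; rewrite in_fsetU in_fsetD1 KE KG.
have fE : ~~ sat_clause f E.
  by apply/negP => fE; apply: muG.1; apply: sat_except_sat fG fE.
exists f; split=> //.
have /sat_clauseP [l] := hf _ (fsetU1r _ _).
rewrite in_fsetU in_fset1 => /orP [lE fl|/eqP -> //].
by have := unsat_lit fE lE; rewrite fl.
Qed.

Lemma MU_compl_occurs G K z :
  MU G -> K \in G -> z \in K -> exists2 E, E \in G & compl z \in E.
Proof.
move=> muG KG zK.
have [/hasP [E EG nzE]|/hasPn pure] := boolP (has (fun E : clause => compl z \in E) G).
  by exists E.
have [f [fG _]] := MU_critical muG KG.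
case: muG.1; apply: (@sat_except_sat (set_lit f z) _ K).
  by move=> E EG EK; apply: sat_set_lit (fG E EG EK) _; apply: pure.
by apply/sat_clauseP; exists z; rewrite ?set_lit_true.
Qed.

Definition resolvent (x : lit) (C D : clause) : clause :=
  (C `|` D) `\` [fset x; compl x].

Lemma in_clash A B m : (m \in clash A B) = (m \in A) && (compl m \in B).
Proof. by rewrite !inE. Qed.

Lemma clash_sym A B l : clash A B = [fset l] -> clash B A = [fset compl l].
Proof.
move=> cl; apply/fsetP => m; rewrite in_fset1 -(can2_eq complK complK).
by rewrite -in_fset1 -cl !in_clash complK andbC.
Qed.

Lemma DP_litP x F K : K \in DP (lvar x) F <->
  (K \in F /\ lvar x \notin cvar K) \/
  exists A B, [/\ A \in F, B \in F, clash A B = [fset x] & K = resolvent x A B].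
Proof.
suff pos v : K \in DP v F <-> (K \in F /\ v \notin cvar K) \/
    exists A B, [/\ A \in F, B \in F, clash A B = [fset (v, true)]
                  & K = resolvent (v, true) A B].
  case: x => v [] //; rewrite pos.
  have resC A B : resolvent (v, true) A B = resolvent (v, false) B A.
    by rewrite /resolvent fsetUC [[fset (v, false); _]]fsetUC.
  split=> -[|[A [B [AF BF /clash_sym cl ->]]]]; try by left.
    by right; exists B, A; rewrite resC.
  by right; exists B, A; rewrite resC.
rewrite /DP in_fsetU; split.
  case/orP => [|/imfset2P [A AF [B /= /andP [BF /eqP cl] ->]]].
    by rewrite !inE => /andP []; left.
  by right; exists A, B.
case=> [[KF vK]|[A [B [AF BF cl ->]]]]; apply/orP; first by left; rewrite !inE KF vK.
by right; apply/imfset2P; exists A => //; exists B; rewrite //= inE BF cl eqxx.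
Qed.

Lemma DP_free x F K : K \in F -> lvar x \notin cvar K -> K \in DP (lvar x) F.
Proof. by move=> KF xK; apply/DP_litP; left. Qed.

Lemma DP_clauseset v F : is_clauseset F -> is_clauseset (DP v F).
Proof.
move=> hF K /(DP_litP (v, true)) [[KF _]|[A [B [AF BF cl ->]]]]; first exact: hF.
have clashE m : m \in A -> compl m \in B -> m = (v, true).
  by move=> mA nmB; apply/fset1P; rewrite -cl in_clash mA nmB.
move=> m mK; apply/negP => nmK; move: mK nmK.
rewrite !inE negb_or => /andP [/andP [mv nmv] mAB] /andP [_ nmAB].
case/orP: mAB nmAB => [mA|mB] /orP [nmA|nmB].
- by move: (hF A AF m mA); rewrite nmA.
- by rewrite (clashE m mA nmB) eqxx in mv.
- by rewrite -(clashE _ nmA) ?complK ?eqxx in nmv.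
- by move: (hF B BF m mB); rewrite nmB.
Qed.

Section DegreeOneLiteral.
Variables (F : cls) (C : clause) (x : lit).
Hypotheses (hC : C \in F) (hCcl : is_clause C) (hxC : x \in C) (hx : ldeg F x = 1).

Lemma DP_ldeg1P K : K \in DP (lvar x) F <->
  (K \in F /\ lvar x \notin cvar K) \/
  exists2 D, D \in F & clash C D = [fset x] /\ K = resolvent x C D.
Proof.
rewrite DP_litP; split=> -[|[A]]; try by left.
  move=> [B [AF BF cl ->]]; right.
  have: x \in clash A B by rewrite cl fset11.
  rewrite in_clash => /andP [xA _].
  by move: cl; rewrite (ldeg1_eq hx hC hxC AF xA) => cl; exists B.
by move=> AF [cl ->]; right; exists C, A.
Qed.

Lemma DP_ldeg1_cases K : K \in DP (lvar x) F ->
  (K \in F /\ lvar x \notin cvar K) \/ C `\ x `<=` K.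
Proof.
case/DP_ldeg1P => [|[D _ [_ ->]]]; first by left.
right; apply/fsubsetP => m /fsetD1P [mx mC]; rewrite !inE mC negb_or mx /= andbT.
by apply: contraTneq mC => ->; apply: hCcl.
Qed.

Lemma DP_ldeg1_mem y K : y \in C -> ldeg F y = 1 ->
  K \in DP (lvar x) F -> y \in K -> C `\ x `<=` K.
Proof.
move=> yC hy /DP_ldeg1_cases [[KF xK] yK|//].
by move: xK; rewrite (ldeg1_eq hy hC yC KF yK) (mem_cvar hxC).
Qed.

Lemma DP_ldeg1_cover : MU F -> ~ satisfiable (DP (lvar x) F) ->
  exists2 K, K \in DP (lvar x) F & C `\ x `<=` K.
Proof.
move=> hMU nsat.
have [/hasP [K KG CK]|/hasPn none] :=
  boolP (has (fun K : clause => C `\ x `<=` K) (DP (lvar x) F)); first by exists K.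
case: nsat; have [f [fF _]] := MU_critical hMU hC.
exists f => K KG; have [[KF xK]|CK] := DP_ldeg1_cases KG.
  by apply: fF KF _; apply: contraNneq xK => ->; apply: mem_cvar.
by move: (none K KG); rewrite CK.
Qed.

End DegreeOneLiteral.

Lemma isomorphic_refl G : isomorphic G G.
Proof.
exists id; split; first exact: inv_bij.
split=> //; rewrite -[RHS]imfset_id; apply: eq_imfset => // K; exact: imfset_id.
Qed.

(* Exchanges the variables of [x] and [y] so that [x] goes to [compl y] and
   [y] to [compl x]; literals of other variables are fixed. *)
Definition lswap (x y l : lit) : lit :=
  let b := l.2 (+) ~~ (x.2 (+) y.2) in
  if lvar l == lvar x then (lvar y, b)
  else if lvar l == lvar y then (lvar x, b) else l.

Section LiteralSwap.
Variables x y : lit.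
Hypothesis hxy : lvar x != lvar y.

Lemma lswapK : involutive (lswap x y).
Proof.
case=> v b; rewrite /lswap /lvar /=.
have [->|vx] := eqVneq v x.1; first by rewrite eq_sym (negbTE hxy) eqxx addbK.
have [->|vy] := eqVneq v y.1; first by rewrite eqxx addbK.
by rewrite (negbTE vx) (negbTE vy).
Qed.

Lemma lswap_compl l : lswap x y (compl l) = compl (lswap x y l).
Proof.
by case: l => v b; rewrite /lswap /lvar /=; case: (v == x.1); case: (v == y.1);
  rewrite /compl /= ?addNb.
Qed.

Lemma lswapC l : lswap x y l = lswap y x l.
Proof.
case: l => v b; rewrite /lswap /lvar /= [y.2 (+) _]addbC.
by have [->|//] := eqVneq v x.1; move: hxy; rewrite /lvar eq_sym => /negbTE ->.
Qed.

Lemma lswap_compl_r : lswap x y (compl y) = x.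
Proof.
case: x y hxy => [vx bx] [vy b'] /=; rewrite /lswap /lvar /= eq_sym => /negbTE ->.
by rewrite eqxx; case: bx; case: b'.
Qed.

Lemma lswap_r : lswap x y y = compl x.
Proof. by move: (lswap_compl (compl y)); rewrite complK lswap_compl_r. Qed.

Lemma lswap_id l : lvar l != lvar x -> lvar l != lvar y -> lswap x y l = l.
Proof. by rewrite /lswap => /negbTE -> /negbTE ->. Qed.

Lemma lswap_fset_id (K : clause) :
  lvar x \notin cvar K -> lvar y \notin cvar K -> lswap x y @` K = K.
Proof.
move=> xK yK; rewrite -[RHS]imfset_id; apply: eq_in_imfset => l lK.
by apply: lswap_id; [apply: contraNneq xK | apply: contraNneq yK] => <-;
  apply: mem_cvar.
Qed.

End LiteralSwap.


Section MinimalUnsatisfiable.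
Variables (F : cls) (C : clause).
Hypotheses (hF : is_clauseset F) (hMU : MU F) (hC : C \in F).
Let C' := [fset x in C | ldeg F x == 1%N].
Hypothesis hsat : forall x, x \in C' -> saturated_MU (DP (lvar x) F).

Lemma C'_mem x : x \in C' -> x \in C /\ ldeg F x = 1.
Proof. by rewrite !inE => /andP [? /eqP]. Qed.

Lemma C'_notin x K : x \in C' -> K \in F -> K != C -> x \notin K.
Proof.
by move=> /C'_mem [xC hx] KF; apply: contraNN => xK; rewrite (ldeg1_eq hx hC xC KF xK).
Qed.

Lemma DP_C'_cover x : x \in C' ->
  exists2 K, K \in DP (lvar x) F & C `\ x `<=` K.
Proof.
by move=> hx; have [xC dx] := C'_mem hx; apply: DP_ldeg1_cover hC (hF hC) xC dx hMU _;
  apply: (hsat hx).1.1.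
Qed.

Lemma C'_no_three x y z : x \in C' -> y \in C' -> z \in C' ->
  x != y -> x != z -> y != z -> False.
Proof.
move=> hx hy hz xy xz yz.
have [[xC dx] [yC _] [zC _]] := And3 (C'_mem hx) (C'_mem hy) (C'_mem hz).
have hG := hsat hx; set G := DP (lvar x) F in hG.
have inCx l : l \in C -> x != l -> l \in C `\ x.
  by move=> lC xl; rewrite in_fsetD1 eq_sym xl.
have CxK K l : K \in G -> l \in C' -> l \in K -> C `\ x `<=` K.
  by move=> KG /C'_mem [lC dl]; apply: (DP_ldeg1_mem hC (hF hC) xC dx lC dl KG).
have [K0 K0G CK0] := DP_C'_cover hx.
have [E EG nzE] : exists2 E, E \in G & compl z \in E.
  exact: MU_compl_occurs hG.1 K0G (fsubsetP CK0 z (inCx z zC xz)).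
have yE : y \notin E.
  apply/negP => yE; have zE := fsubsetP (CxK E y EG hy yE) z (inCx z zC xz).
  by move: (DP_clauseset hF EG zE); rewrite nzE.
have yG : lvar y \in fvar G.
  by apply/fvarP; exists K0 => //; apply/mem_cvar/(fsubsetP CK0)/inCx.
have [f [fG fE fy]] := saturated_MU_critical hG EG yG yE.
have vyz := clause_lvar_neq (hF hC) yC zC yz.
apply: hG.1.1; apply: (@sat_except_sat (set_lit f (compl z)) _ E).
  move=> K KG KE; have [zK|nzK] := boolP (z \in K).
    apply/sat_clauseP; exists y; last by rewrite set_lit_other.
    exact: fsubsetP (CxK K z KG hz zK) y (inCx y yC xy).
  by apply: sat_set_lit (fG K KG KE) _; rewrite complK.
by apply/sat_clauseP; exists (compl z); rewrite ?set_lit_true.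
Qed.

Lemma C'_pair x y : x \in C' -> y \in C' -> x != y -> C' = [fset x; y].
Proof.
move=> hx hy xy; apply/fsetP => z; apply/idP/fset2P => [hz|[->|->] //].
have [->|zx] := eqVneq z x; first by left.
have [->|zy] := eqVneq z y; first by right.
by case: (C'_no_three hx hy hz xy); rewrite eq_sym.
Qed.

Lemma C'_compl_disjoint x y D : x \in C' -> y \in C' -> x != y ->
  D \in F -> compl x \in D -> compl y \notin D.
Proof.
move=> hx hy xy DF nxD; apply/negP => nyD.
have [xC _] := C'_mem hx; have [yC dy] := C'_mem hy.
have [f [fF fD]] := MU_critical hMU DF.
apply: (hsat hy).1.1; exists f => K KG.
have [[KF yK]|CK] := DP_ldeg1_cases hC (hF hC) yC dy KG.
  by apply: fF KF _; apply: contraNneq yK => ->; apply: mem_cvar nyD.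
apply/sat_clauseP; exists x; last exact: unsat_compl fD nxD.
by apply: (fsubsetP CK); rewrite in_fsetD1 xC xy.
Qed.

Lemma C'_compl_clause_free x y D : x \in C' -> y \in C' -> x != y ->
  D \in F -> compl x \in D -> lvar y \notin cvar D.
Proof.
move=> hx hy xy DF nxD; have [xC _] := C'_mem hx.
have DC : D != C by apply: contraTneq nxD => ->; apply: hF.
by rewrite notin_cvar (C'_notin hy DF DC) (C'_compl_disjoint hx hy xy DF nxD).
Qed.

Hypothesis h2 : (2 <= #|` C'|)%N.

Lemma C'_other x : x \in C' -> exists2 y, y \in C' & x != y.
Proof.
move=> hx; have /fset0Pn [y] : C' `\ x != fset0.
  by move: h2; rewrite (cardfsD1 x) hx add1n ltnS cardfs_gt0.
by rewrite in_fsetD1 => /andP [yx hy]; exists y; rewrite // eq_sym.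
Qed.

Lemma card_C' : #|` C'| = 2.
Proof.
have /fset0Pn [x hx] : C' != fset0 by rewrite -cardfs_gt0 (leq_trans _ h2).
have [y hy xy] := C'_other hx.
by rewrite (C'_pair hx hy xy) cardfs2 xy.
Qed.

(* With [y] the other literal of [C']: if [l] were missing from [D], an
   assignment falsifying only [D] in [DP (lvar y) F] with [l] true would
   become a model of [F] after making [compl x] and [compl y] true. *)
Lemma C'_compl_subset x D : x \in C' -> D \in F -> compl x \in D ->
  C `\` C' `<=` D.
Proof.
move=> hx DF nxD; apply/fsubsetP => l /fsetDP [lC lC'].
have [y hy xy] := C'_other hx.
have [xC _] := C'_mem hx; have [yC dy] := C'_mem hy.
apply: contraT => lD; exfalso.
have hG := hsat hy; set G := DP (lvar y) F in hG.
have DG : D \in G := DP_free DF (C'_compl_clause_free hx hy xy DF nxD).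
have ly : l != y by apply: contraNneq lC' => ->.
have lG : lvar l \in fvar G.
  have [K KG CK] := DP_C'_cover hy.
  by apply/fvarP; exists K => //; apply/mem_cvar/(fsubsetP CK); rewrite in_fsetD1 ly.
have [f [fG fD fl]] := saturated_MU_critical hG DG lG lD.
have lx : l != x by apply: contraNneq lC' => ->.
have yx : y != x by rewrite eq_sym.
have vlx := clause_lvar_neq (hF hC) lC xC lx.
have vly := clause_lvar_neq (hF hC) lC yC ly.
have vyx := clause_lvar_neq (hF hC) yC xC yx.
apply: hMU.1; exists (set_lit (set_lit f (compl y)) (compl x)) => K KF.
have [->|KC] := eqVneq K C.
  by apply/sat_clauseP; exists l; rewrite ?set_lit_other.
have [nxK|nxK] := boolP (compl x \in K).
  by apply/sat_clauseP; exists (compl x); rewrite ?set_lit_true.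
have [nyK|nyK] := boolP (compl y \in K).
  by apply/sat_clauseP; exists (compl y); rewrite // set_lit_other ?set_lit_true.
have KG : K \in G.
  by apply: (DP_free KF); rewrite notin_cvar (C'_notin hy KF KC) nyK.
have KD : K != D by apply: contraNneq nxK => ->.
apply: sat_set_lit; last by rewrite complK (C'_notin hx KF KC).
by apply: sat_set_lit (fG K KG KD) _; rewrite complK (C'_notin hy KF KC).
Qed.

Section TwoLiterals.
Variables x y : lit.
Hypotheses (hx : x \in C') (hy : y \in C') (xy : x != y).

Lemma C'_compl_mem D m : D \in F -> compl x \in D ->
  m \in C -> m != x -> m != y -> m \in D.
Proof.
move=> DF nxD mC mx my; apply: (fsubsetP (C'_compl_subset hx DF nxD)).
by rewrite in_fsetD mC (C'_pair hx hy xy) !inE negb_or mx my.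
Qed.

Lemma C'_clash D : D \in F -> compl x \in D -> clash C D = [fset x].
Proof.
move=> DF nxD; have [xC _] := C'_mem hx.
apply/fsetP => m; rewrite in_clash in_fset1.
apply/andP/eqP => [[mC nmD]|->]; last by [].
apply: contraTeq nmD => mx.
have [->|my] := eqVneq m y; first exact: C'_compl_disjoint hx hy xy DF nxD.
by apply: (hF DF); apply: C'_compl_mem.
Qed.

Lemma C'_resolvent D : D \in F -> compl x \in D ->
  resolvent x C D = y |` (D `\ compl x).
Proof.
move=> DF nxD; have [xC _] := C'_mem hx; have [yC _] := C'_mem hy.
have xD : x \notin D by apply: (C'_notin hx DF); apply: contraTneq nxD => ->; apply: hF.
apply/fsetP => m; rewrite /resolvent !inE negb_or; apply/idP/idP.
  case/andP => [/andP [mx nmx] /orP [mC|mD]]; last by rewrite nmx mD orbT.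
  have [//|my] := eqVneq m y.
  by rewrite nmx (C'_compl_mem DF nxD mC mx my).
case/orP => [/eqP ->|/andP [nmx mD]].
  rewrite eq_sym xy yC /= andbT.
  by apply: contraTneq yC => ->; apply: hF.
by rewrite nmx mD orbT !andbT; apply: contraTneq mD => ->.
Qed.
Lemma DP_C'_mem K : K \in DP (lvar x) F <-> (K \in F /\ lvar x \notin cvar K) \/
  exists2 D, D \in F /\ compl x \in D & K = y |` (D `\ compl x).
Proof.
have [xC dx] := C'_mem hx; rewrite (DP_ldeg1P hC xC dx).
split=> -[|[D]]; try by left.
  move=> DF [cl ->]; have: x \in clash C D by rewrite cl fset11.
  by rewrite in_clash => /andP [_ nxD]; right; exists D; rewrite ?C'_resolvent.
by move=> [DF nxD] ->; right; exists D; rewrite ?C'_clash ?C'_resolvent.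
Qed.

End TwoLiterals.

Lemma lswap_DP x y K : x \in C' -> y \in C' -> x != y ->
  K \in DP (lvar x) F -> lswap x y @` K \in DP (lvar y) F.
Proof.
move=> hx hy xy /(DP_C'_mem hx hy xy); have [xC _] := C'_mem hx; have [yC _] := C'_mem hy.
have vxy := clause_lvar_neq (hF hC) xC yC xy.
have yx : y != x by rewrite eq_sym.
case=> [[KF xK]|[D [DF nxD] ->]].
  have KC : K != C by apply: contraNneq xK => ->; apply: mem_cvar.
  have yK := C'_notin hy KF KC.
  have [nyK|nyK] := boolP (compl y \in K); last first.
    have yvK : lvar y \notin cvar K by rewrite notin_cvar yK.
    by rewrite lswap_fset_id //; apply: DP_free.
  rewrite -(fsetD1K nyK) imfsetU1 lswap_compl_r // lswap_fset_id //.
  - by apply/(DP_C'_mem hy hx yx); right; exists K.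
  - by apply: contra xK; apply: (fsubsetP (cvarS (fsubD1set K (compl y)))).
  - by rewrite notin_cvarD1.
have DC : D != C by apply: contraTneq nxD => ->; apply: hF.
have yD := C'_compl_clause_free hx hy xy DF nxD.
rewrite imfsetU1 lswap_r // lswap_fset_id ?fsetD1K ?notin_cvarD1 ?(C'_notin hx DF DC) //.
  exact: DP_free.
by apply: contra yD; apply: (fsubsetP (cvarS (fsubD1set D (compl x)))).
Qed.

Lemma DP_C'_isomorphic x y : x \in C' -> y \in C' ->
  isomorphic (DP (lvar x) F) (DP (lvar y) F).
Proof.
move=> hx hy; have [<-|xy] := eqVneq x y; first exact: isomorphic_refl.
have [xC _] := C'_mem hx; have [yC _] := C'_mem hy.
have vxy := clause_lvar_neq (hF hC) xC yC xy.
exists (lswap x y); split; first exact/inv_bij/lswapK.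
split; first exact: lswap_compl.
apply/eqP; rewrite eqEfsubset; apply/andP; split; apply/fsubsetP => K.
  by case/imfsetP => K' /= K'G ->; apply: lswap_DP.
move=> KG; apply/imfsetP; exists (lswap y x @` K).
  by apply: lswap_DP; rewrite // eq_sym.
rewrite -imfset_comp -[LHS]imfset_id; apply: eq_imfset => // l /=.
by rewrite -(lswapC vxy) lswapK.
Qed.

End MinimalUnsatisfiable.

Theorem lemma68 (F : cls) (C : clause) :
  is_clauseset F -> MU F -> C \in F ->
  let C' := [fset x in C | ldeg F x == 1%N] in
  (2 <= #|` C'|)%N ->
  (forall x, x \in C' -> saturated_MU (DP (lvar x) F)) ->
  [/\ #|` C'| = 2%N,
      (forall x D, x \in C' -> D \in F -> compl x \in D -> C `\` C' `<=` D) &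
      (forall x y, x \in C' -> y \in C' ->
         isomorphic (DP (lvar x) F) (DP (lvar y) F))].
Proof.
move=> hF hMU hC C' h2 hsat; split.
- exact: card_C'.
- by move=> x D; apply: C'_compl_subset.
- by move=> x y; apply: DP_C'_isomorphic.
Qed.
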